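(* (i) Let $B_1,\dots,B_n$ be subspaces of a finite-dimensional vector space $W$ over a finite field and let $\beta\subseteq\{1,\dots,n\}$. Then there exists a subspace $A$ of $W$ such that $H(T_A(B_j))=H(B_j\mid B_{\beta\setminus j})$ for all $j\in\beta$, $H(T_A(B_j):j\in\beta)=\sum_{j\in\beta}H(T_A(B_j))$, and $H(A)=H(B_\beta)-\sum_{j\in\beta}H(B_j\mid B_{\beta\setminus j})$. (ii) Let $\{B^i_1,\dots,B^i_n\}_{i=1}^\infty$ be a sequence of collections of subspaces (for each $i$, of a finite-dimensional vector space $W^i$ over a finite field), $\beta\subseteq\{1,\dots,n\}$, and $k(i)>0$ with $\lim_{i\to\infty}\frac{1}{k(i)}\big(H(B^i_\beta)-\sum_{j\in\beta}H(B^i_j\mid B^i_{\beta\setminus j})\big)=0$. Then there exist subspaces $A^i$ of $W^i$ such that for every $i$, $\sum_{j\in\beta}H(T_{A^i}(B^i_j))=H(T_{A^i}(B^i_j):j\in\beta)$, and for all $\alpha\subseteq\{1,\dots,n\}$, $\lim_{i\to\infty}\frac{1}{k(i)}H(T_{A^i}(B^i_j):j\in\alpha)=\lim_{i\to\infty}\frac{1}{k(i)}H(B^i_\alpha)$ (in the sense that if either limit exists then both exist and are equal).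
   Context: For subspaces, $\langle\cdots\rangle$ denotes the span. $B_\gamma$ denotes the collection $\{B_j:j\in\gamma\}$ and $B_{\beta\setminus j}=\{B_l:l\in\beta, l\ne j\}$. $H(B_\gamma)=H(B_j:j\in\gamma)=\dim\langle B_j:j\in\gamma\rangle$, $H(B)=\dim B$, and $H(\mathcal{S}\mid\mathcal{R})=\dim\langle\mathcal{S},\mathcal{R}\rangle-\dim\langle\mathcal{R}\rangle$. For a subspace $A$ of $W$, choose any $A^*$ with $\langle A,A^*\rangle=W$, $A\cap A^*=\{0\}$; for $u=u_1+u_2$ with $u_1\in A^*,u_2\in A$ set $T_A(u)=u_1$, and $T_A(B)=\{T_A(u):u\in B\}$. (The dimensions in the statement do not depend on the choice of $A^*$.) *)

From HB Require Import structures.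
From mathcomp Require Import all_boot all_order all_algebra.
From mathcomp Require Import boolp classical_sets reals topology normedtype.
Set Implicit Arguments. Unset Strict Implicit. Unset Printing Implicit Defensive.
Import Order.TTheory GRing.Theory Num.Theory.
Local Open Scope ring_scope.

Section Entropy.
Variables (F : fieldType) (vT : vectType F).

Definition spanB (n : nat) (B : 'I_n -> {vspace vT}) (g : {set 'I_n}) : {vspace vT} :=
  (\sum_(j in g) B j)%VS.

Definition Hset (n : nat) (B : 'I_n -> {vspace vT}) (g : {set 'I_n}) : nat :=
  \dim (spanB B g).

Definition Hcond (n : nat) (B : 'I_n -> {vspace vT}) (j : 'I_n) (beta : {set 'I_n}) : nat :=
  (\dim (B j + spanB B (beta :\ j))%VS - \dim (spanB B (beta :\ j)))%N.

Definition is_compl (A C : {vspace vT}) : Prop :=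
  (A + C)%VS = fullv /\ (A :&: C)%VS = 0%VS.

(* T_A(B) for the decomposition W = A^* (+) A with A^* = C:
   u = u1 + u2, u1 in C, u2 in A, T_A(u) = u1; i.e. projection onto C along A *)
Definition TA (A C B : {vspace vT}) : {vspace vT} := (daddv_pi C A @: B)%VS.

End Entropy.

From HB Require Import structures.
From mathcomp Require Import all_boot all_order all_algebra.
From mathcomp Require Import boolp classical_sets reals topology normedtype.
From mathcomp Require Import zify.
Set Implicit Arguments. Unset Strict Implicit. Unset Printing Implicit Defensive.
Import Order.TTheory GRing.Theory Num.Theory numFieldNormedType.Exports.
Local Open Scope classical_set_scope.
Local Open Scope ring_scope.

(* Take A := sum over j in beta of (B_j cap <B_{beta\j}>).  The projection
   T_A has kernel A, so dim T_A(U) = dim U - dim (U cap A).  Since A lies in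
   every <B_{beta\j}>, B_j cap A = B_j cap <B_{beta\j}>, which gives
   dim T_A(B_j) = H(B_j | B_{beta\j}).  The images T_A(B_j) are independent:
   if sum_j T_A(b_j) = 0 then sum_j b_j is in A, hence b_j lies in
   B_j cap <B_{beta\j}>, which is contained in A, so T_A(b_j) = 0.  As A is
   contained in <B_beta>, dim A + dim T_A(B_beta) = H(B_beta), which is (i).
   For (ii), 0 <= H(B_alpha) - dim T_A(B_alpha) <= dim A, and the hypothesis
   says exactly that dim A / k(i) -> 0. *)

Section Projection.
Variables (F : fieldType) (vT : vectType F) (A C : {vspace vT}).
Hypothesis AC : is_compl A C.

Lemma lker_daddv_pi_compl : lker (daddv_pi C A) = A.
Proof.
case: AC => AC_full AC_cap; have CA_cap : (C :&: A = 0)%VS by rewrite capvC.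
apply/vspaceP => v; rewrite memv_ker.
have vCA : v \in (C + A)%VS by rewrite addvC AC_full memvf.
have v_split := daddv_pi_add CA_cap vCA.
apply/eqP/idP => [pi_v0 | vA].
  by move: v_split; rewrite pi_v0 add0r => <-; apply: memv_pi.
by move: v_split; rewrite (daddv_pi_id AC_cap vA) => /(canRL (addrK v)); rewrite subrr.
Qed.

Lemma dimv_TA (U : {vspace vT}) : (\dim (U :&: A) + \dim (TA A C U))%N = \dim U.
Proof. by rewrite -{1}lker_daddv_pi_compl limg_ker_dim. Qed.

Lemma dimv_TA_bounds (U : {vspace vT}) :
  (\dim (TA A C U) <= \dim U <= \dim (TA A C U) + \dim A)%N.
Proof. by have := dimv_TA U; have := dimvS (capvSr U A); lia. Qed.

End Projection.

Section Overlap.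
Variables (F : fieldType) (vT : vectType F) (n : nat).
Variables (B : 'I_n -> {vspace vT}) (beta : {set 'I_n}).

Definition overlap : {vspace vT} := (\sum_(j in beta) (B j :&: spanB B (beta :\ j)))%VS.

Lemma overlap_sub_spanBD1 j : j \in beta -> (overlap <= spanB B (beta :\ j))%VS.
Proof.
move=> jb; apply/subv_sumP => l lb; have [-> | ne] := eqVneq l j.
  exact: capvSr.
by apply: subv_trans (capvSl _ _) _; apply: (sumv_sup l); rewrite ?in_setD1 ?ne.
Qed.

Lemma overlap_sub_spanB : (overlap <= spanB B beta)%VS.
Proof. by apply/subv_sumP => l lb; apply: subv_trans (capvSl _ _) (sumv_sup l _ _). Qed.

Lemma capv_overlap j : j \in beta ->
  (B j :&: overlap)%VS = (B j :&: spanB B (beta :\ j))%VS.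
Proof.
move=> jb; apply/eqP; rewrite eqEsubv capvS ?overlap_sub_spanBD1 //=.
by rewrite subv_cap capvSl (sumv_sup j).
Qed.

Lemma Hcond_cap j :
  (\dim (B j :&: spanB B (beta :\ j)) + Hcond B j beta)%N = \dim (B j).
Proof.
rewrite /Hcond; have := dimv_sum_cap (B j) (spanB B (beta :\ j)).
have := dimvS (capvSl (B j) (spanB B (beta :\ j))); lia.
Qed.

Variable C : {vspace vT}.
Hypothesis overlapC : is_compl overlap C.

Lemma dimv_TA_overlap j : j \in beta -> \dim (TA overlap C (B j)) = Hcond B j beta.
Proof.
move=> jb; apply/eqP; rewrite -(eqn_add2l (\dim (B j :&: overlap))).
by rewrite dimv_TA // capv_overlap // Hcond_cap.
Qed.

Lemma directv_TA_overlap : directv (\sum_(j in beta) TA overlap C (B j)).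
Proof.
set f := daddv_pi C overlap; have ker_f := lker_daddv_pi_compl overlapC.
apply/directv_sum_independent => us us_img us_sum0 j jb.
have /choice [bs bsP] : forall i, exists b, i \in beta -> b \in B i /\ us i = f b.
  move=> i; have [ib | _] := boolP (i \in beta); last by exists 0.
  by have /memv_imgP [b bB ->] := us_img i ib; exists b.
have sum_bs : \sum_(i in beta) bs i \in overlap.
  rewrite -ker_f memv_ker linear_sum; apply/eqP/(eq_trans _ us_sum0).
  by apply: eq_bigr => i /bsP [_ ->].
have bj_overlap : bs j \in (B j :&: overlap)%VS.
  rewrite capv_overlap // memv_cap; have [-> _] := bsP j jb.
  rewrite (_ : bs j = \sum_(i in beta) bs i - \sum_(i in beta :\ j) bs i).
    rewrite memvB ?(subvP (overlap_sub_spanBD1 jb) _ sum_bs) //.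
    by rewrite /spanB; apply: memv_sumr => i /setD1P [_ /bsP []].
  by rewrite (big_setD1 j jb) addrK.
have [_ ->] := bsP j jb; apply/eqP; rewrite -memv_ker ker_f.
by move: bj_overlap; rewrite memv_cap => /andP [].
Qed.

Lemma dimv_sum_TA_overlap : \dim (\sum_(j in beta) TA overlap C (B j))%VS
    = (\sum_(j in beta) \dim (TA overlap C (B j)))%N.
Proof. exact/directvP/directv_TA_overlap. Qed.

Lemma dimv_overlap_add_Hcond :
  (\dim overlap + \sum_(j in beta) Hcond B j beta)%N = Hset B beta.
Proof.
rewrite -(eq_bigr _ dimv_TA_overlap) -dimv_sum_TA_overlap /TA -limg_sum.
by rewrite -[RHS](dimv_TA overlapC) (capv_idPr overlap_sub_spanB).
Qed.

End Overlap.

Lemma cvg_sandwich_shift (R : realType) (u v w : nat -> R) (l : R) :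
  (forall i, 0 <= v i - u i <= w i) -> w @ \oo --> 0 ->
  (u @ \oo --> l <-> v @ \oo --> l).
Proof.
move=> uvw w0.
have d0 : (fun i => v i - u i) @ \oo --> 0.
  by apply: (squeeze_cvgr _ (cvg_cst 0) w0); apply: filterE.
split => [ul | vl].
  have -> : v = (fun i => u i + (v i - u i)) by apply/funext => i; rewrite addrC subrK.
  by rewrite -[l]addr0; apply: cvgD.
have -> : u = (fun i => v i - (v i - u i)) by apply/funext => i; rewrite opprB addrC subrK.
by rewrite -[l]subr0; apply: cvgB.
Qed.

Theorem lemma5 :
  (* (i) *)
  (forall (F : finFieldType) (vT : vectType F) (n : nat)
          (B : 'I_n -> {vspace vT}) (beta : {set 'I_n}),
   exists A : {vspace vT},
     forall C : {vspace vT}, is_compl A C ->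
       (forall j, j \in beta -> \dim (TA A C (B j)) = Hcond B j beta) /\
       \dim (\sum_(j in beta) TA A C (B j))%VS
         = (\sum_(j in beta) \dim (TA A C (B j)))%N /\
       (\dim A + \sum_(j in beta) Hcond B j beta)%N = Hset B beta) /\
  (* (ii) *)
  (forall (R : realType) (F : nat -> finFieldType)
          (vT : forall i, vectType (F i)) (n : nat)
          (B : forall i, 'I_n -> {vspace vT i}) (beta : {set 'I_n})
          (k : nat -> R),
   (forall i, 0 < k i) ->
   (fun i => ((Hset (B i) beta)%:R
               - (\sum_(j in beta) Hcond (B i) j beta)%:R) / k i) @ \oo --> (0 : R) ->
   exists A : forall i, {vspace vT i},
     forall C : forall i, {vspace vT i}, (forall i, is_compl (A i) (C i)) ->
       (forall i, (\sum_(j in beta) \dim (TA (A i) (C i) (B i j)))%N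
                  = \dim (\sum_(j in beta) TA (A i) (C i) (B i j))%VS) /\
       (forall (alpha : {set 'I_n}) (l : R),
          ((fun i => (\dim (\sum_(j in alpha) TA (A i) (C i) (B i j))%VS)%:R / k i)
             @ \oo --> l)
          <->
          ((fun i => (Hset (B i) alpha)%:R / k i) @ \oo --> l))).
Proof.
split=> [F vT n B beta | R F vT n B beta k k_gt0 gap0].
  exists (overlap B beta) => C oC; split; first exact: dimv_TA_overlap.
  by rewrite dimv_sum_TA_overlap // (dimv_overlap_add_Hcond oC).
exists (fun i => overlap (B i) beta) => C oC.
split=> [i | alpha l]; first by rewrite dimv_sum_TA_overlap.
apply: (cvg_sandwich_shift (w := fun i => (\dim (overlap (B i) beta))%:R / k i)).
  move=> i; have /andP [lo hi] := dimv_TA_bounds (oC i) (spanB (B i) alpha).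
  rewrite -(limg_sum _ _ _ (B i)) -/(TA _ _ _) /Hset -mulrBl.
  have k_ge0 : 0 <= (k i)^-1 by rewrite invr_ge0 ltW.
  rewrite mulr_ge0 ?subr_ge0 ?ler_nat //= ler_wpM2r //.
  by rewrite lerBlDr -natrD ler_nat addnC.
have dim_overlap i : (\dim (overlap (B i) beta))%:R
    = (Hset (B i) beta)%:R - (\sum_(j in beta) Hcond (B i) j beta)%:R :> R.
  by rewrite -(dimv_overlap_add_Hcond (oC i)) natrD addrK.
by under eq_fun do rewrite dim_overlap.
Qed.
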